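(* Let $q\ge 2$. The additive group $\mathbb{Z}[\tfrac1q]$ has uncountably many submonoids.
   Context: $\mathbb{Z}[\tfrac1q]=\{nq^i: n,i\in\mathbb{Z}\}$, viewed as an additive group; a submonoid is a subset containing $0$ and closed under addition. *)

From mathcomp Require Import all_boot all_order all_algebra.
Set Implicit Arguments. Unset Strict Implicit. Unset Printing Implicit Defensive.
Import Order.TTheory GRing.Theory Num.Theory.
Local Open Scope ring_scope.

Definition Zinvq (q : nat) (x : rat) : Prop :=
  exists (n i : int), x = n%:~R * ((q%:R : rat) ^ i).

Definition is_submonoid_Zinvq (q : nat) (S : rat -> Prop) : Prop :=
  (forall x, S x -> Zinvq q x) /\ S 0 /\ (forall x y, S x -> S y -> S (x + y)).

Definition countable_family (F : (rat -> Prop) -> Prop) : Prop :=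
  exists f : (rat -> Prop) -> nat,
    forall S T, F S -> F T -> f S = f T -> forall x, S x <-> T x.

(** The numbers e_k = 1 + q^-(k+1) are pairwise distinct elements of Z[1/q]
    lying in [1, 2).  For every set A of indices, the set S_A of elements of
    Z[1/q] that are 0, at least 2, or equal to some e_k with k in A is a
    submonoid, since a sum of two nonzero elements is at least 2; and S_A
    contains e_k exactly when k is in A.  So A |-> S_A embeds the power set of
    the natural numbers into the family of submonoids, which by Cantor's
    diagonal argument cannot be countable. *)
From mathcomp Require Import all_boot all_order all_algebra.
From mathcomp Require Import ring lra zify.
Set Implicit Arguments. Unset Strict Implicit. Unset Printing Implicit Defensive.
Import Order.TTheory GRing.Theory Num.Theory.
Local Open Scope ring_scope.

Lemma pred_nat_not_ext_injective (f : (nat -> Prop) -> nat) :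
  ~ (forall A B, f A = f B -> forall k, A k <-> B k).
Proof.
move=> f_inj.
pose diag n := exists2 B, f B = n & ~ B n.
have not_diag : ~ diag (f diag).
  by move=> diag_f; case: (diag_f) => B fB; apply; apply/(f_inj B diag fB).
by apply: (not_diag); exists diag.
Qed.

Lemma not_countable_family_of_code (F : (rat -> Prop) -> Prop)
    (code : (nat -> Prop) -> rat -> Prop) (x : nat -> rat) :
  (forall A, F (code A)) -> (forall A k, code A (x k) <-> A k) ->
  ~ countable_family F.
Proof.
move=> F_code code_x [f f_inj].
apply: (@pred_nat_not_ext_injective (f \o code)) => A B /= eq_f k.
by rewrite -code_x -(code_x B); apply: f_inj.
Qed.

Section CodeMonoid.
Variables (R : realFieldType) (G : R -> Prop) (e : nat -> R).
Hypotheses (G0 : G 0) (GD : forall x y, G x -> G y -> G (x + y)).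
Hypotheses (G_e : forall k, G (e k)) (e_inj : injective e).
Hypotheses (e_ge1 : forall k, 1 <= e k) (e_lt2 : forall k, e k < 2).

Definition code_monoid (A : nat -> Prop) (x : R) : Prop :=
  x = 0 \/ (G x /\ 2 <= x) \/ exists2 k, A k & x = e k.

Lemma code_monoid_eq0_or_ge1 A x : code_monoid A x -> x = 0 \/ (G x /\ 1 <= x).
Proof.
case=> [-> | [[Gx x_ge2] | [k _ ->]]]; [by left | right | right] => //.
by split=> //; lra.
Qed.

Lemma code_monoid_submonoid A :
  [/\ forall x, code_monoid A x -> G x, code_monoid A 0 &
      forall x y, code_monoid A x -> code_monoid A y -> code_monoid A (x + y)].
Proof.
split; first by move=> x /code_monoid_eq0_or_ge1 [-> | []].
- by left.
move=> x y Sx Sy.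
case: (code_monoid_eq0_or_ge1 Sx) => [-> | [Gx x_ge1]]; first by rewrite add0r.
case: (code_monoid_eq0_or_ge1 Sy) => [-> | [Gy y_ge1]]; first by rewrite addr0.
by right; left; split; [exact: GD | lra].
Qed.

Lemma code_monoid_e A k : code_monoid A (e k) <-> A k.
Proof.
split=> [|Ak]; last by right; right; exists k.
have ek_ge1 := e_ge1 k; have ek_lt2 := e_lt2 k.
by case=> [ek0 | [[_ ek_ge2] | [j Aj /e_inj ->]]] //; lra.
Qed.

End CodeMonoid.

Section ZinvqAdditive.
Variable q : nat.
Hypothesis q_gt0 : (0 < q)%N.

Lemma ZinvqP x :
  Zinvq q x <-> exists (n : int) (j : nat), x = n%:~R / (q%:R : rat) ^+ j.
Proof.
split=> [[n [[k | k] ->]] | [n [j ->]]].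
- by exists (n * (q ^ k)%N%:Z), 0%N; rewrite expr0 divr1 intrM -pmulrn natrX.
- by exists n, k.+1.
- by exists n, (- j%:Z); rewrite exprnN.
Qed.

Lemma Zinvq0 : Zinvq q 0.
Proof. by exists 0, 0; rewrite mul0r. Qed.

Lemma ZinvqD x y : Zinvq q x -> Zinvq q y -> Zinvq q (x + y).
Proof.
have q_neq0 j : (q%:R : rat) ^+ j != 0.
  by rewrite expf_neq0 // pnatr_eq0 -lt0n.
move=> /ZinvqP [n1 [j1 ->]] /ZinvqP [n2 [j2 ->]]; apply/ZinvqP.
exists (n1 * (q ^ j2)%N%:Z + n2 * (q ^ j1)%N%:Z), (j1 + j2)%N.
rewrite exprD intrD !intrM -!pmulrn !natrX.
by field; rewrite !q_neq0.
Qed.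

End ZinvqAdditive.

Section Markers.
Variable q : nat.
Hypothesis q_ge2 : (2 <= q)%N.

Definition marker (k : nat) : rat := 1 + ((q%:R : rat) ^+ k.+1)^-1.

Lemma q_pow_gt1 k : 1 < (q%:R : rat) ^+ k.+1.
Proof. by rewrite -natrX ltr1n -(expn0 q) ltn_exp2l. Qed.

Lemma Zinvq_marker k : Zinvq q (marker k).
Proof.
apply: ZinvqD; [lia | by exists 1, 0; rewrite mul1r |].
by apply/ZinvqP; exists 1, k.+1; rewrite div1r.
Qed.

Lemma marker_inj : injective marker.
Proof.
move=> k m /addrI /invr_inj /eqP; rewrite -!natrX eqr_nat.
by move=> /eqP /(expnI q_ge2) [].
Qed.

Lemma marker_ge1 k : 1 <= marker k.
Proof. by rewrite lerDl invr_ge0 ltW // (lt_trans ltr01) // q_pow_gt1. Qed.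

Lemma marker_lt2 k : marker k < 2.
Proof.
suff : ((q%:R : rat) ^+ k.+1)^-1 < 1 by rewrite /marker; lra.
by rewrite invf_lt1 ?q_pow_gt1 // (lt_trans ltr01) ?q_pow_gt1.
Qed.

End Markers.

Theorem mainTheorem9 (q : nat) (hq : (2 <= q)%N) :
  ~ countable_family (is_submonoid_Zinvq q).
Proof.
have q_gt0 : (0 < q)%N by lia.
have code_sub A : is_submonoid_Zinvq q (code_monoid (Zinvq q) (marker q) A).
  have [] := code_monoid_submonoid (Zinvq0 q) (ZinvqD q_gt0)
    (Zinvq_marker hq) (marker_ge1 hq) A.
  by split=> //; split.
apply: (not_countable_family_of_code code_sub) => A k.
exact: code_monoid_e (marker_inj hq) (marker_ge1 hq) (marker_lt2 hq) A k.
Qed.
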